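(* Fix $i\in[n]$, arbitrary $\mathbf{b}_{-i}^{(1)},\dots,\mathbf{b}_{-i}^{(T)}\in B^{n-1}$, and formats $\mathcal{M}^{(1)},\dots,\mathcal{M}^{(T)}$ all satisfying allocation monotonicity. Suppose bidder $i$ uses $s_{i,\boldsymbol{\pi}^{(t)}}$ at each round $t$, for some quantile strategies $\boldsymbol{\pi}^{(t)}\in\Delta([K+1])$. Then \[ \max_{s\in\mathcal{S}}\sum_{t\in[T]}\big(u_i^{(t)}(s)-u_i^{(t)}(s_{i,\boldsymbol{\pi}^{(t)}})\big)=\max_{\boldsymbol{\pi}\in\Delta([K+1])}\sum_{t\in[T]}\big(q_i^{(t)}(\boldsymbol{\pi})-q_i^{(t)}(\boldsymbol{\pi}^{(t)})\big). \]
   Context: Bidder $i$'s value $v_i\in[0,1]$ is drawn from a continuous distribution $\mathcal{D}_i$ on $[0,1]$ with CDF $F_i$ and quantile function $F_i^{-1}(y):=\inf\{v\in[0,1]:F_i(v)\ge y\}$. The bid set is $B:=\{j/K:j=0,\dots,K\}$; $\mathcal{S}$ is the set of all functions $s:[0,1]\to B$. Auction formats $\mathcal{M}^{(t)}=(\mathbf{x}^{(t)},\mathbf{p}^{(t)})$, $\mathbf{x}^{(t)}:B^n\to\Delta([n])$ (nonnegative entries summing to at most 1), $\mathbf{p}^{(t)}:B^n\to[0,1]^n$. Allocation monotonicity: $x_i^{(t)}(b_i,\mathbf{b}_{-i})\le x_i^{(t)}(b_i',\mathbf{b}_{-i})$ whenever $b_i\le b_i'$. Utility: $u_i^{(t)}(s):=\mathbb{E}_{v_i\sim\mathcal{D}_i}[x_i^{(t)}(s(v_i),\mathbf{b}_{-i}^{(t)})v_i-p_i^{(t)}(s(v_i),\mathbf{b}_{-i}^{(t)})]$.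 Quantile strategies are $\boldsymbol{\pi}\in\Delta([K+1])$ (probability simplex); with $\Pi_0:=0$, $\Pi_j:=\sum_{\ell\le j}\pi_\ell$, the strategy $s_{i,\boldsymbol{\pi}}$ bids $0$ on $[0,F_i^{-1}(\Pi_1)]$ and $\frac{j-1}{K}$ on $(F_i^{-1}(\Pi_{j-1}),F_i^{-1}(\Pi_j)]$ for $j=2,\dots,K+1$. Quantile utility: $q_i^{(t)}(\boldsymbol{\pi}):=u_i^{(t)}(s_{i,\boldsymbol{\pi}})$. *)

From HB Require Import structures.
From mathcomp Require Import all_boot all_order all_algebra.
From mathcomp Require Import all_classical all_reals all_analysis.
Set Implicit Arguments. Unset Strict Implicit. Unset Printing Implicit Defensive.
Import Order.TTheory GRing.Theory Num.Theory.
Local Open Scope classical_set_scope.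
Local Open Scope ring_scope.

(* Bids: the index j : 'I_K.+1 stands for the bid j/K in B = {0,1/K,...,1};
   the order on indices coincides with the order on bids. *)
Definition profile (n K : nat) := {ffun 'I_n -> 'I_K.+1}.

Definition upd (n K : nat) (b : profile n K) (j : 'I_n) (c : 'I_K.+1)
  : profile n K := [ffun k => if k == j then c else b k].

Definition is_format (R : realType) (n K : nat)
  (x p : profile n K -> 'I_n -> R) : Prop :=
  (forall b j, 0 <= x b j) /\ (forall b, \sum_(j < n) x b j <= 1) /\
  (forall b j, 0 <= p b j <= 1).

Definition alloc_monotone (R : realType) (n K : nat)
  (x : profile n K -> 'I_n -> R) : Prop :=
  forall (b : profile n K) (j : 'I_n) (c c' : 'I_K.+1),
    (c <= c')%N -> x (upd b j c) j <= x (upd b j c') j.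

Definition cont_dist01 (R : realType) (P : probability R R) : Prop :=
  P `[0, 1]%classic = 1%E /\ (forall v : R, P [set v] = 0%E).

Definition cdf (R : realType) (P : probability R R) (v : R) : R :=
  fine (P [set w : R | w <= v]).

Definition quantile (R : realType) (P : probability R R) (y : R) : R :=
  inf [set v : R | 0 <= v <= 1 /\ y <= cdf P v].

(* A strategy s : [0,1] -> B (extended arbitrarily outside [0,1]); for the
   expectation to make sense we require measurability. *)
Definition strategy_measurable (R : realType) (K : nat) (s : R -> 'I_K.+1)
  : Prop := forall j : 'I_K.+1, measurable (s @^-1` [set j]).

Definition utility (R : realType) (n K : nat) (P : probability R R)
  (x p : profile n K -> 'I_n -> R) (i : 'I_n) (bmi : profile n K)
  (s : R -> 'I_K.+1) : R :=
  Rintegral P `[0, 1]%classic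
    (fun v => x (upd bmi i (s v)) i * v - p (upd bmi i (s v)) i).

(* probability simplex Delta([K+1]); index l stands for pi_{l+1} *)
Definition simplex (R : realType) (K : nat) (pi : 'I_K.+1 -> R) : Prop :=
  (forall l, 0 <= pi l) /\ \sum_(l < K.+1) pi l = 1.

(* Pi_j = sum_{l <= j} pi_l  (paper indexing, j = 0..K+1) *)
Definition Pi (R : realType) (K : nat) (pi : 'I_K.+1 -> R) (j : nat) : R :=
  \sum_(l < K.+1 | (l < j)%N) pi l.

(* v lies in the interval on which s_{i,pi} bids j/K *)
Definition qinterval (R : realType) (K : nat) (P : probability R R)
  (pi : 'I_K.+1 -> R) (j : 'I_K.+1) (v : R) : bool :=
  if (j == 0 :> nat) then (0 <= v) && (v <= quantile P (Pi pi 1))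
  else (quantile P (Pi pi j) < v) && (v <= quantile P (Pi pi j.+1)).

(* the quantile strategy s_{i,pi} (bid 0 wherever undefined by the paper) *)
Definition qstrat (R : realType) (K : nat) (P : probability R R)
  (pi : 'I_K.+1 -> R) (v : R) : 'I_K.+1 :=
  odflt ord0 [pick j : 'I_K.+1 | qinterval P pi j v].

Definition qutility (R : realType) (n K : nat) (P : probability R R)
  (x p : profile n K -> 'I_n -> R) (i : 'I_n) (bmi : profile n K)
  (pi : 'I_K.+1 -> R) : R :=
  utility P x p i bmi (qstrat P pi).

From Pilot Require Import Defs.
From HB Require Import structures.
From mathcomp Require Import all_boot all_order all_algebra.
From mathcomp Require Import all_classical all_reals all_analysis.
From mathcomp Require Import lra measurable_realfun.
From mathcomp Require Import lebesgue_integral_theory.lebesgue_Rintegral.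
Import Order.TTheory GRing.Theory Num.Theory.
Local Open Scope classical_set_scope.
Local Open Scope ring_scope.
Set Implicit Arguments. Unset Strict Implicit. Unset Printing Implicit Defensive.

(* Summed over the rounds, the utility of a strategy s is the integral over
   the value v of A (s v) * v - C (s v), where A and C are the total allocation
   and total payment of each bid.  By allocation monotonicity A is
   nondecreasing, so the pointwise maximiser of the integrand, with ties broken
   towards the highest bid, is nondecreasing in v; it maximises the utility,
   hence the regret, over all strategies.  A nondecreasing strategy coincides
   almost everywhere with the quantile strategy that gives each bid the
   probability of the values on which it is played: since D_i has no atoms, the
   quantiles of the cumulative masses are the jump points of the strategy. *)

Section BestResponse.
Variables (R : realType) (K : nat) (g : 'I_K.+1 -> R -> R).

Definition is_best (j : 'I_K.+1) (v : R) : bool := [forall k, g k v <= g j v].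

(* Ties are broken towards the highest bid; this is what makes the best
   response monotone. *)
Definition best_response (v : R) : 'I_K.+1 :=
  inord (\max_(j < K.+1 | is_best j v) j).

Lemma best_response_spec v :
  is_best (best_response v) v /\ forall j, is_best j v -> (j <= best_response v)%N.
Proof.
have [j0 _ hj0] := Order.TotalTheory.arg_maxP (fun j => g j v) (erefl (ord0 \in predT)).
have hc : (0 < #|[pred j | is_best j v]|)%N.
  by apply/card_gt0P; exists j0; rewrite inE; apply/forallP => k; exact: hj0.
have [j1 hj1 hmax] := eq_bigmax_cond (fun j : 'I_K.+1 => nat_of_ord j) hc.
have hmax' : (\max_(j < K.+1 | is_best j v) j)%N = j1.
  by rewrite -hmax; apply: eq_bigl => j; rewrite inE.
have -> : best_response v = j1 by apply: val_inj; rewrite /best_response hmax' /= inordK.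
split; first by move: hj1; rewrite inE.
move=> j hj; rewrite -hmax'.
exact: (@leq_bigmax_cond _ (is_best^~ v) (fun j : 'I_K.+1 => nat_of_ord j) j hj).
Qed.

Lemma best_responseP v : is_best (best_response v) v.
Proof. by case: (best_response_spec v). Qed.

Lemma best_response_max v j : is_best j v -> (j <= best_response v)%N.
Proof. by case: (best_response_spec v) => _; apply. Qed.

(* Single crossing: with slopes nondecreasing in the bid, a higher bid that is
   weakly better at v stays weakly better at every w >= v. *)
Lemma best_response_homo (a c : 'I_K.+1 -> R) :
  (forall j v, g j v = a j * v - c j) ->
  {homo a : j k / (j <= k)%N >-> j <= k} ->
  {homo best_response : v w / v <= w >-> (v <= w)%N}.
Proof.
move=> hg ha v w hvw; set j := best_response v; set j' := best_response w.
rewrite leqNgt; apply/negP => hlt.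
have h1 : g j' v <= g j v by move/forallP: (best_responseP v); apply.
have h2 : g j w < g j' w.
  rewrite ltNge; apply/negP => hle.
  have : (j <= j')%N.
    apply: best_response_max; apply/forallP => k; apply: le_trans hle.
    by move/forallP: (best_responseP w); apply.
  by rewrite leqNgt hlt.
have ha' : a j' <= a j by apply: ha; exact: ltnW.
move: h1 h2; rewrite !hg => h1 h2.
have : 0 <= (a j - a j') * (w - v) by apply: mulr_ge0; lra.
nra.
Qed.

End BestResponse.

Section FiniteTests.
Context {d : measure_display} {T : measurableType d}.

Lemma measurable_fun_set_true (f : T -> bool) :
  measurable_fun setT f -> measurable [set v | f v].
Proof. by move=> hf; have := hf measurableT [set true] I; rewrite setTI. Qed.

Lemma measurable_fun_forallb (I : finType) (b : I -> T -> bool) :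
  (forall k, measurable_fun setT (b k)) ->
  measurable_fun setT (fun v => [forall k, b k v]).
Proof.
move=> hb; have -> : (fun v => [forall k, b k v]) = (fun v => all (b^~ v) (enum I)).
  by apply/funext => v; apply/forallP/allP => [h k _ | h k]; [|apply: h; rewrite mem_enum].
by elim: (enum I) => [|k s IH] /=; [exact: measurable_cst | exact: measurable_and].
Qed.

Lemma measurable_fun_existsb (I : finType) (b : I -> T -> bool) :
  (forall k, measurable_fun setT (b k)) ->
  measurable_fun setT (fun v => [exists k, b k v]).
Proof.
move=> hb; have -> : (fun v => [exists k, b k v]) = (fun v => ~~ [forall k, ~~ b k v]).
  by apply/funext => v; rewrite negb_forall; apply: eq_existsb => k; rewrite negbK.
by apply/measurable_neg/measurable_fun_forallb => k; exact: measurable_neg.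
Qed.

(* The fibre is a finite union, over the truth tables that F maps to j, of
   intersections of the tests and their negations. *)
Lemma measurable_fibre_tests (I : finType) (J : eqType) (Q : I -> T -> bool)
    (F : {ffun I -> bool} -> J) (j : J) :
  (forall k, measurable_fun setT (Q k)) ->
  measurable [set v | F [ffun k => Q k v] = j].
Proof.
move=> hQ.
have -> : [set v | F [ffun k => Q k v] = j] =
    [set v | [exists w, (F w == j) && [forall k, w k == Q k v]]].
  apply/seteqP; split => v /=.
    by move=> <-; apply/existsP; exists [ffun k => Q k v]; rewrite eqxx;
      apply/forallP => k; rewrite ffunE.
  case/existsP => w /andP[/eqP <- /forallP hw]; congr F.
  by apply/ffunP => k; rewrite ffunE; apply/esym/eqP.
apply/measurable_fun_set_true/measurable_fun_existsb => w.
case: (F w == j); last exact: measurable_cst.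
apply: measurable_fun_forallb => k.
have -> : (fun v => w k == Q k v) = (fun v => if w k then Q k v else ~~ Q k v).
  by apply/funext => v; case: (w k); case: (Q k v).
by case: (w k); [exact: hQ | exact: measurable_neg].
Qed.

End FiniteTests.

Lemma in_itv01 (R : realType) (v : R) : `[0, 1]%classic v <-> 0 <= v <= 1.
Proof. by rewrite /= in_itv. Qed.

Lemma measurable_set_le (R : realType) (w : R) : measurable [set v : R | v <= w].
Proof.
by apply: measurable_fun_set_true; apply: measurable_fun_ler => //; exact: measurable_cst.
Qed.

Lemma measurable_set_lt (R : realType) (w : R) : measurable [set v : R | v < w].
Proof.
by apply: measurable_fun_set_true; apply: measurable_fun_ltr => //; exact: measurable_cst.
Qed.

Lemma measurable_set_gt (R : realType) (w : R) : measurable [set v : R | w < v].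
Proof.
by apply: measurable_fun_set_true; apply: measurable_fun_ltr => //; exact: measurable_cst.
Qed.

Section Strategies.
Variables (R : realType) (K : nat).
Implicit Types (s : R -> 'I_K.+1).

Lemma measurable_fun_eq_strategy s j :
  strategy_measurable s -> measurable_fun setT (fun v => s v == j).
Proof.
move=> hs; apply: (measurable_fun_bool true); rewrite setTI.
by move: (hs j); congr measurable; apply/seteqP; split => v /= /eqP.
Qed.

Lemma measurable_strategy_lt s m :
  strategy_measurable s -> measurable [set v | (s v < m)%N].
Proof.
move=> hs; have -> : [set v | (s v < m)%N] =
    [set v | [exists j : 'I_K.+1, (j < m)%N && (s v == j)]].
  apply/seteqP; split => v /=; first by move=> hv; apply/existsP; exists (s v); rewrite hv eqxx.
  by case/existsP => j /andP[hj /eqP ->].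
apply/measurable_fun_set_true/measurable_fun_existsb => j.
by apply: measurable_and; [exact: measurable_cst | exact: measurable_fun_eq_strategy].
Qed.

Lemma measurable_fun_strategy_comp s (phi : 'I_K.+1 -> R) :
  strategy_measurable s -> measurable_fun setT (fun v => phi (s v)).
Proof.
move=> hs; have -> : (fun v => phi (s v)) =
    (fun v => \sum_(j <- enum 'I_K.+1) (if s v == j then phi j else 0)).
  apply/funext => v; rewrite (bigD1_seq (s v)) ?mem_enum ?enum_uniq //= eqxx.
  by rewrite big1_seq ?addr0 // => k /andP[hk _]; rewrite eq_sym (negbTE hk).
apply: measurable_sum => j.
by apply: measurable_fun_ifT; [exact: measurable_fun_eq_strategy | exact: measurable_cst ..].
Qed.

Lemma strategy_measurable_best_response (g : 'I_K.+1 -> R -> R) :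
  (forall j, measurable_fun setT (g j)) -> strategy_measurable (best_response g).
Proof.
move=> hg j; pose F (w : {ffun 'I_K.+1 -> bool}) : 'I_K.+1 := inord (\max_(k < K.+1 | w k) k).
have eF v : F [ffun k => is_best g k v] = best_response g v.
  by rewrite /F; congr inord; apply: eq_bigl => k; rewrite ffunE.
have -> : best_response g @^-1` [set j] = [set v | F [ffun k => is_best g k v] = j].
  by apply/seteqP; split => v; rewrite /= eF.
apply: measurable_fibre_tests => k.
apply: measurable_fun_forallb => l; exact: measurable_fun_ler.
Qed.

Lemma strategy_measurable_qstrat (P : probability R R) (pi : 'I_K.+1 -> R) :
  strategy_measurable (qstrat P pi).
Proof.
move=> j.
pose F (w : {ffun 'I_K.+1 -> bool}) : 'I_K.+1 := odflt ord0 [pick k | w k].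
have eF v : F [ffun k => qinterval P pi k v] = qstrat P pi v.
  by rewrite /F /qstrat; congr odflt; apply: eq_pick => k; rewrite ffunE.
have -> : qstrat P pi @^-1` [set j] = [set v | F [ffun k => qinterval P pi k v] = j].
  by apply/seteqP; split => v; rewrite /= eF.
apply: measurable_fibre_tests => k; rewrite /qinterval; case: (k == 0 :> nat).
  by apply: measurable_and; apply: measurable_fun_ler => //; exact: measurable_cst.
by apply: measurable_and; [apply: measurable_fun_ltr | apply: measurable_fun_ler] => //;
  exact: measurable_cst.
Qed.

End Strategies.

Section QuantileOfDownset.
Variables (R : realType) (P : probability R R).
Hypothesis hP : cont_dist01 P.

Definition downclosed01 (D : set R) : Prop :=
  D `<=` `[0, 1]%classic /\ forall u v, 0 <= u -> u <= v -> D v -> D u.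

Lemma probability_fineK (A : set R) : measurable A -> (fine (P A))%:E = P A.
Proof. by move=> mA; rewrite fineK // fin_num_measure. Qed.

Lemma fine_probability_le (A B : set R) :
  measurable A -> measurable B -> A `<=` B -> fine (P A) <= fine (P B).
Proof.
by move=> mA mB AB; rewrite -lee_fin !probability_fineK // le_measure // inE.
Qed.

Lemma fine_probabilityU (A B : set R) : measurable A -> measurable B ->
  A `&` B = set0 -> fine (P (A `|` B)) = fine (P A) + fine (P B).
Proof.
move=> mA mB AB; apply: EFin_inj; rewrite EFinD !probability_fineK //; last exact: measurableU.
exact: measureU.
Qed.

Lemma fine_probability_subadd (A B : set R) : measurable A -> measurable B ->
  fine (P (A `|` B)) <= fine (P A) + fine (P B).
Proof.
move=> mA mB; rewrite -lee_fin EFinD !probability_fineK //; last exact: measurableU.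
exact: measureU2.
Qed.

Lemma probability_outside01 (A : set R) :
  measurable A -> A `&` `[0, 1]%classic = set0 -> P A = 0%E.
Proof.
move=> mA A01; have m01 : measurable (`[0, 1]%classic : set R) by exact: measurable_itv.
have out0 : P (~` `[0, 1]%classic) = 0%E by rewrite probability_setC // hP.1 subee.
apply/le_anti; rewrite measure_ge0 andbT -out0.
apply: le_measure; rewrite ?inE //; first exact: measurableC.
by move=> v Av A01v; have : (A `&` `[0, 1]%classic) v by []; rewrite A01.
Qed.

Lemma cdf_ge_downclosed D w :
  measurable D -> downclosed01 D -> 0 <= w <= 1 -> ~ D w -> fine (P D) <= Defs.cdf P w.
Proof.
move=> mD [D01 Ddown] /andP[w0 _] nDw.
apply: fine_probability_le => //; first exact: measurable_set_le.
move=> v Dv /=; rewrite leNgt; apply/negP => wv; apply: nDw; exact: Ddown w0 (ltW wv) Dv.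
Qed.

Lemma downclosed_lt_quantile D v : measurable D -> downclosed01 D ->
  0 <= v <= 1 -> v < Defs.quantile P (fine (P D)) -> D v.
Proof.
move=> mD hD v01 vq; apply: contrapT => nDv.
have : Defs.quantile P (fine (P D)) <= v.
  by apply: ge_inf; [exists 0 => u [/andP[]] | split => //; exact: cdf_ge_downclosed].
by rewrite leNgt vq.
Qed.

Lemma downclosed_null_above D w : measurable D -> downclosed01 D ->
  0 <= w <= 1 -> fine (P D) <= Defs.cdf P w -> P (D `&` [set v | w < v]) = 0%E.
Proof.
move=> mD [D01 Ddown] /andP[w0 w1] Dw; set E := D `&` _.
have mE : measurable E by apply: measurableI => //; exact: measurable_set_gt.
have [[u /andP[u0 uw] nDu] | Dlow] := pselect (exists2 u, 0 <= u <= w & ~ D u).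
  suff -> : E = set0 by rewrite measure0.
  apply/seteqP; split => v // [Dv /= wv]; apply: nDu.
  by apply: Ddown u0 (le_trans uw (ltW wv)) Dv.
have mneg := measurable_set_lt (0 : R).
have Pneg : P [set v : R | v < 0] = 0%E.
  apply: probability_outside01 => //; apply/seteqP; split => v // [/= v0 /in_itv01/andP[]].
  by rewrite leNgt v0.
have sub : [set v | v <= w] `|` E `<=` D `|` [set v : R | v < 0].
  move=> v [/= vw | [Dv _]]; [|by left].
  have [v0|v0] := ltP v 0; [by right | left].
  by apply: contrapT => nDv; apply: Dlow; exists v => //; rewrite v0.
have mlow : measurable ([set v | v <= w] `|` E).
  by apply: measurableU => //; exact: measurable_set_le.
have disj : [set v | v <= w] `&` E = set0.
  by apply/seteqP; split => v // [/= vw [_ /= wv]]; move: (lt_le_trans wv vw); rewrite ltxx.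
have PU := fine_probability_le mlow (measurableU _ _ mD mneg) sub.
rewrite fine_probabilityU // in PU; last exact: measurable_set_le.
have := fine_probability_subadd mD mneg; rewrite Pneg /= addr0 => Dneg.
have PE0 := fine_ge0 (measure_ge0 P E).
apply/eqP; rewrite -probability_fineK // eqe; apply/eqP; rewrite /Defs.cdf in Dw; lra.
Qed.

Lemma downclosed_null_above_quantile D : measurable D -> downclosed01 D ->
  P (D `&` [set v | Defs.quantile P (fine (P D)) < v]) = 0%E.
Proof.
move=> mD hD; set tau := Defs.quantile P _.
have hinf : has_inf [set v : R | 0 <= v <= 1 /\ fine (P D) <= Defs.cdf P v].
  split; last by exists 0 => u [/andP[]].
  exists 1; split; first by rewrite ler01 lexx.
  by apply: fine_probability_le => //; [exact: measurable_set_le | move=> v /hD.1/in_itv01/andP[]].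
apply/negligibleP; first by apply: measurableI => //; exact: measurable_set_gt.
apply: (@negligibleS _ _ _ _ (\bigcup_k (D `&` [set v | tau + k.+1%:R^-1 < v]))).
  by move=> v [Dv /= tv]; have [k hk] := ltr_add_invr tv; exists k.
apply: negligible_bigcup => k.
have k0 : 0 < (k.+1%:R : R)^-1 by rewrite invr_gt0 ltr0Sn.
have [w [w01 Dw] wt] := inf_adherent k0 hinf.
exists (D `&` [set v | w < v]); split.
- by apply: measurableI => //; exact: measurable_set_gt.
- exact: downclosed_null_above.
- by move=> v [Dv /= hv]; split => //=; exact: lt_trans hv.
Qed.

End QuantileOfDownset.

Lemma Pi_telescope (R : realType) (K : nat) (Y : nat -> R) (j : nat) :
  (j <= K.+1)%N -> Pi (fun l : 'I_K.+1 => Y l.+1 - Y l) j = Y j - Y 0%N.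
Proof.
move=> jK; rewrite /Pi -(big_ord_widen _ (fun l => Y l.+1 - Y l) jK).
by rewrite -(big_mkord xpredT (fun l => Y l.+1 - Y l)) telescope_sumr.
Qed.

Section MonotoneStrategy.
Variables (R : realType) (K : nat) (P : probability R R) (s : R -> 'I_K.+1).
Hypothesis hP : cont_dist01 P.
Hypothesis s_homo : forall v w, 0 <= v -> v <= w -> w <= 1 -> (s v <= s w)%N.
Hypothesis s_meas : strategy_measurable s.

Definition bid_below (m : nat) : set R := `[0, 1]%classic `&` [set v | (s v < m)%N].

Lemma measurable_bid_below m : measurable (bid_below m).
Proof. by apply: measurableI; [exact: measurable_itv | exact: measurable_strategy_lt]. Qed.

Lemma downclosed_bid_below m : downclosed01 (bid_below m).
Proof.
split=> [v [] //|u v u0 uv [/in_itv01/andP[_ v1] svm]].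
split; first by apply/in_itv01; rewrite u0 (le_trans uv v1).
exact: leq_ltn_trans (s_homo u0 uv v1) svm.
Qed.

Definition mass_below (m : nat) : R := fine (P (bid_below m)).

Definition threshold (m : nat) : R := Defs.quantile P (mass_below m).

Definition mass_at (l : 'I_K.+1) : R := mass_below l.+1 - mass_below l.

Lemma Pi_mass_at j : (j <= K.+1)%N -> Pi mass_at j = mass_below j.
Proof.
move=> jK; rewrite /mass_at Pi_telescope // /mass_below.
by rewrite (_ : bid_below 0 = set0) ?measure0 ?subr0 //; apply/seteqP; split => v // [].
Qed.

Lemma simplex_mass_at : simplex mass_at.
Proof.
split=> [l|].
  rewrite subr_ge0; apply: fine_probability_le; [exact: measurable_bid_below ..|].
  by move=> v [v01 /= svl]; split => //=; exact: ltnW.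
transitivity (Pi mass_at K.+1); first by apply: eq_bigl => l; rewrite ltn_ord.
rewrite Pi_mass_at // /mass_below (_ : bid_below K.+1 = `[0, 1]%classic) ?hP.1 //.
by apply/seteqP; split => [v []//|v v01]; split => //=; exact: ltn_ord.
Qed.

(* Off a null set, s moves above bid m exactly at the m-th threshold; the
   thresholds themselves are null because P has no atoms. *)
Lemma threshold_ae : exists N : set R, [/\ measurable N, P N = 0%E &
  forall v, 0 <= v <= 1 -> ~ N v -> forall m, (s v < m)%N = (v <= threshold m)].
Proof.
pose F m := (bid_below m `&` [set v | threshold m < v]) `|` [set threshold m].
have mF m : measurable (F m).
  apply: measurableU; last exact: measurable_set1.
  by apply: measurableI; [exact: measurable_bid_below | exact: measurable_set_gt].
exists (\bigcup_m F m); split; first exact: bigcupT_measurable.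
  apply/negligibleP; first exact: bigcupT_measurable.
  apply: negligible_bigcup => m; apply: negligibleU; apply/negligibleP.
  - by apply: measurableI; [exact: measurable_bid_below | exact: measurable_set_gt].
  - exact: downclosed_null_above_quantile (measurable_bid_below m) (downclosed_bid_below m).
  - exact: measurable_set1.
  - exact: hP.2.
move=> v v01 nNv m; apply/idP/idP => [svm|vt].
  by rewrite leNgt; apply/negP => tv; apply: nNv; exists m => //; left; split.
have vt' : v < threshold m.
  by rewrite lt_neqAle vt andbT; apply/eqP => vtm; apply: nNv; exists m => //; right.
by have [] := downclosed_lt_quantile (measurable_bid_below m) (downclosed_bid_below m) v01 vt'.
Qed.

Lemma quantile_strategy_ae : exists N : set R, [/\ measurable N, P N = 0%E &
  forall v, 0 <= v <= 1 -> ~ N v -> qstrat P mass_at v = s v].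
Proof.
have [N [mN N0 sN]] := threshold_ae; exists N; split => // v v01 nNv.
rewrite /qstrat (eq_pick (_ : _ =1 pred1 (s v))).
  by case: pickP => [j /eqP //|/(_ (s v))]; rewrite /= eqxx.
move=> j; rewrite /qinterval /= [_ == s v]eq_sym -val_eqE /=.
case: (posnP j) => [-> | _].
  by rewrite Pi_mass_at // -/(threshold 1) -sN // (andP v01).1 ltnS leqn0.
rewrite !Pi_mass_at ?(ltnW (ltn_ord j)) ?ltn_ord // -/(threshold j) -/(threshold j.+1).
by rewrite ltNge -!sN // -leqNgt ltnS eqn_leq andbC.
Qed.

End MonotoneStrategy.

Section Integrals.
Context {d : measure_display} {T : measurableType d} {R : realType}.
Variables (mu : {measure set T -> \bar R}) (D : set T).
Hypothesis mD : measurable D.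

Lemma Rintegral_sum (I : Type) (r : seq I) (h : I -> T -> R) :
  (forall k, mu.-integrable D (EFin \o h k)) ->
  Rintegral mu D (fun v => \sum_(k <- r) h k v) = \sum_(k <- r) Rintegral mu D (h k).
Proof.
move=> hi; elim: r => [|k r IH].
  by rewrite big_nil; under eq_Rintegral do rewrite big_nil; rewrite Rintegral_cst // mul0r.
rewrite big_cons -IH; under eq_Rintegral do rewrite big_cons.
rewrite RintegralD //; have -> : EFin \o (fun v => \sum_(k <- r) h k v) =
    (fun v => \sum_(k <- r) (EFin \o h k) v)%E by apply/funext => v /=; rewrite sumEFin.
by apply: integrable_sum => // k _; exact: hi.
Qed.

Lemma le_Rintegral_ae (N : set T) (f g : T -> R) :
  measurable N -> mu N = 0%E ->
  mu.-integrable D (EFin \o f) -> mu.-integrable D (EFin \o g) ->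
  (forall v, D v -> ~ N v -> f v <= g v) ->
  Rintegral mu D f <= Rintegral mu D g.
Proof.
move=> mN N0 intf intg fg; rewrite /Rintegral !(negligible_integral mN mD) //.
have mDN : measurable (D `\` N) by exact: measurableD.
have sDN : D `\` N `<=` D by exact: subDsetl.
by apply: le_Rintegral => //; [exact: integrableS intf | exact: integrableS intg |
  move=> v []; exact: fg].
Qed.

End Integrals.

Lemma integrable_bounded01 (R : realType) (P : probability R R) (f : R -> R) (M : R) :
  measurable_fun setT f -> (forall v, 0 <= v <= 1 -> `|f v| <= M) ->
  P.-integrable `[0, 1]%classic (EFin \o f).
Proof.
move=> mf fM; apply: measurable_bounded_integrable.
- exact: measurable_itv.
- by apply: le_lt_trans (probability_le1 _ _) _; [exact: measurable_itv | exact: ltey].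
- exact: measurable_funS mf.
exists M; split; first by rewrite num_real.
by move=> M' MM' v /in_itv01 v01; apply: le_trans (fM v v01) (ltW MM').
Qed.

Lemma format_alloc_le1 (R : realType) (n K : nat) (x p : profile n K -> 'I_n -> R) b j :
  is_format x p -> 0 <= x b j <= 1.
Proof.
move=> [x0 [x1 _]]; rewrite x0 /=; apply: le_trans (x1 b).
by rewrite (bigD1 j) //= lerDl; apply: sumr_ge0 => k _; exact: x0.
Qed.

Section Rounds.
Variables (R : realType) (n K T : nat) (i : 'I_n) (P : probability R R).
Variables (x p : 'I_T -> profile n K -> 'I_n -> R) (bmi : 'I_T -> profile n K).
Hypothesis hfmt : forall t, is_format (x t) (p t).

Definition round_payoff t (j : 'I_K.+1) (v : R) : R :=
  x t (upd (bmi t) i j) i * v - p t (upd (bmi t) i j) i.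

Definition total_alloc (j : 'I_K.+1) : R := \sum_(t < T) x t (upd (bmi t) i j) i.
Definition total_pay (j : 'I_K.+1) : R := \sum_(t < T) p t (upd (bmi t) i j) i.
Definition total_payoff (j : 'I_K.+1) (v : R) : R := total_alloc j * v - total_pay j.

Definition total_utility (s : R -> 'I_K.+1) : R :=
  \sum_(t < T) utility P (x t) (p t) i (bmi t) s.

Lemma total_alloc_homo : (forall t, alloc_monotone (x t)) ->
  {homo total_alloc : j k / (j <= k)%N >-> j <= k}.
Proof. by move=> hmon j k jk; apply: ler_sum => t _; exact: hmon. Qed.

Lemma measurable_total_payoff j : measurable_fun setT (total_payoff j).
Proof.
apply: measurable_funB; last exact: measurable_cst.
by apply: measurable_funM => //; exact: measurable_cst.
Qed.

Lemma integrable_round_payoff t s : strategy_measurable s ->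
  P.-integrable `[0, 1]%classic (EFin \o (fun v => round_payoff t (s v) v)).
Proof.
move=> hs; apply: (@integrable_bounded01 _ _ _ 2).
  apply: measurable_funB; first apply: measurable_funM => //.
  - exact: (measurable_fun_strategy_comp (fun j => x t (upd (bmi t) i j) i) hs).
  - exact: (measurable_fun_strategy_comp (fun j => p t (upd (bmi t) i j) i) hs).
move=> v /andP[v0 v1]; rewrite /round_payoff.
have /andP[x0 x1] := format_alloc_le1 (upd (bmi t) i (s v)) i (hfmt t).
have /andP[p0 p1] := (hfmt t).2.2 (upd (bmi t) i (s v)) i.
rewrite ler_norml; apply/andP; split; nra.
Qed.

Lemma total_utilityE s : strategy_measurable s ->
  total_utility s = Rintegral P `[0, 1]%classic (fun v => total_payoff (s v) v).
Proof.
move=> hs; rewrite /total_payoff /total_alloc /total_pay.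
under eq_Rintegral do rewrite mulr_suml -sumrB.
by rewrite (Rintegral_sum (measurable_itv _)) // => t; exact: integrable_round_payoff.
Qed.

Lemma total_utility_le_best_response s s' N :
  strategy_measurable s -> strategy_measurable s' -> measurable N -> P N = 0%E ->
  (forall v, 0 <= v <= 1 -> ~ N v -> s' v = best_response total_payoff v) ->
  total_utility s <= total_utility s'.
Proof.
move=> hs hs' mN N0 hs'N; rewrite !total_utilityE //.
have int_total s0 : strategy_measurable s0 ->
    P.-integrable `[0, 1]%classic (EFin \o (fun v => total_payoff (s0 v) v)).
  move=> hs0; have -> : EFin \o (fun v => total_payoff (s0 v) v) =
      (fun v => \sum_(t < T) (EFin \o (fun v => round_payoff t (s0 v) v)) v)%E.
    by apply/funext => v /=; rewrite sumEFin /total_payoff mulr_suml -sumrB.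
  apply: integrable_sum => [|t _]; [exact: measurable_itv | exact: integrable_round_payoff].
apply: (le_Rintegral_ae (measurable_itv _) mN N0 (int_total _ hs) (int_total _ hs')).
move=> v /in_itv01 v01 nNv; rewrite hs'N //.
by move/forallP: (best_responseP total_payoff v); apply.
Qed.

End Rounds.

Theorem mainTheorem4 (R : realType) (n K T : nat) (hK : (0 < K)%N)
  (i : 'I_n) (P : probability R R) (hP : cont_dist01 P)
  (x p : 'I_T -> profile n K -> 'I_n -> R)
  (hfmt : forall t, is_format (x t) (p t))
  (hmon : forall t, alloc_monotone (x t))
  (bmi : 'I_T -> profile n K)
  (pit : 'I_T -> 'I_K.+1 -> R) (hpit : forall t, simplex (pit t)) :
  let regS := fun s : R -> 'I_K.+1 =>
    \sum_(t < T) (utility P (x t) (p t) i (bmi t) s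
                  - utility P (x t) (p t) i (bmi t) (qstrat P (pit t))) in
  let regQ := fun pi : 'I_K.+1 -> R =>
    \sum_(t < T) (qutility P (x t) (p t) i (bmi t) pi
                  - qutility P (x t) (p t) i (bmi t) (pit t)) in
  exists s0 : R -> 'I_K.+1, strategy_measurable s0 /\
    (forall s, strategy_measurable s -> regS s <= regS s0) /\
  exists pi0 : 'I_K.+1 -> R, simplex pi0 /\
    (forall pi, simplex pi -> regQ pi <= regQ pi0) /\
    regS s0 = regQ pi0.
Proof.
move=> regS regQ.
pose br := best_response (total_payoff i x p bmi).
have br_homo : {homo br : v w / v <= w >-> (v <= w)%N}.
  by apply: (best_response_homo (c := total_pay i p bmi)) => //; exact: total_alloc_homo.
have br_meas : strategy_measurable br.
  by apply: strategy_measurable_best_response => j; exact: measurable_total_payoff.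
have br_homo01 v w : 0 <= v -> v <= w -> w <= 1 -> (br v <= br w)%N.
  by move=> _ vw _; exact: br_homo.
pose pi0 := mass_at P br.
have [N [mN N0 pi0_br]] := quantile_strategy_ae hP br_homo01 br_meas.
have opt s : strategy_measurable s -> regS s <= regS (qstrat P pi0).
  move=> hs; rewrite /regS !sumrB lerD2r.
  exact: total_utility_le_best_response (strategy_measurable_qstrat _ _) mN N0 pi0_br.
exists (qstrat P pi0); split; first exact: strategy_measurable_qstrat.
split; first exact: opt.
exists pi0; split; first exact: simplex_mass_at.
split => // pi _.
exact: opt (strategy_measurable_qstrat _ _).
Qed.
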